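(* Let $p$ be a prime, $n$ a positive integer, and for $j=0,\dots,p-1$ let $f_j:\mathbb{F}_p^n\to\mathbb{F}_p$ be bent functions. Then the bent function $F:\mathbb{F}_p^{n+2}\to\mathbb{F}_p$ defined by \[F(x,x_{n+1},y)=f_y(x)+x_{n+1}y\qquad(x\in\mathbb{F}_p^n,\ x_{n+1},y\in\mathbb{F}_p)\] is dual-bent if and only if $f_j$ is dual-bent for every $0\le j\le p-1$.
   Context: Here $f_y$ denotes $f_j$ for $j$ the element $y\in\mathbb{F}_p=\{0,\dots,p-1\}$. On $\mathbb{F}_p^N$ use the standard dot product. Walsh transform: $\widehat f(b)=\sum_{x\in\mathbb{F}_p^N}\epsilon_p^{f(x)-b\cdot x}$, $\epsilon_p=e^{2\pi i/p}$; $f$ is bent if $|\widehat f(b)|=p^{N/2}$ for all $b$. For bent $f$, $\widehat f(b)=\zeta_bp^{N/2}\epsilon_p^{f^*(b)}$ for some $\zeta_b\in\{\pm1,\pm i\}$ (for $p=2$, $\zeta_b=1$), defining the dual $f^*:\mathbb{F}_p^N\to\mathbb{F}_p$. A bent function is dual-bent if its dual is bent. *)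

From HB Require Import structures.
From mathcomp Require Import all_boot all_order all_algebra.
From mathcomp Require Import all_classical all_reals.
From mathcomp Require Import trigo.
From mathcomp Require Import complex.
Set Implicit Arguments. Unset Strict Implicit. Unset Printing Implicit Defensive.
Import Order.TTheory GRing.Theory Num.Theory.
Local Open Scope ring_scope.
Local Open Scope complex_scope.

Definition dotp (p N : nat) (b x : 'rV['F_p]_N) : 'F_p := \sum_(i < N) b 0 i * x 0 i.

Definition eps (R : realType) (p : nat) : complex R :=
  (cos (2 * pi / p%:R) +i* sin (2 * pi / p%:R))%C.

Definition walsh (R : realType) (p N : nat) (f : 'rV['F_p]_N -> 'F_p)
    (b : 'rV['F_p]_N) : complex R :=
  \sum_(x : 'rV['F_p]_N) eps R p ^+ (nat_of_ord (f x - dotp b x)).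

Definition bent (R : realType) (p N : nat) (f : 'rV['F_p]_N -> 'F_p) : Prop :=
  forall b, `|walsh R f b| = sqrtC (p%:R : complex R) ^+ N.

Definition is_dual (R : realType) (p N : nat) (f g : 'rV['F_p]_N -> 'F_p) : Prop :=
  forall b, exists zeta : complex R,
    (zeta \in [:: 1; -1; 'i; -'i]) /\ (p = 2%N -> zeta = 1) /\
    walsh R f b = zeta * sqrtC (p%:R : complex R) ^+ N * eps R p ^+ (nat_of_ord (g b)).

Definition dual_bent (R : realType) (p N : nat) (f : 'rV['F_p]_N -> 'F_p) : Prop :=
  bent R f /\ exists g, is_dual R f g /\ bent R g.

Definition glueF (p n : nat) (f : 'F_p -> 'rV['F_p]_n -> 'F_p)
    (v : 'rV['F_p]_(n + 2)) : 'F_p :=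
  let x := \row_(i < n) v 0 (lshift 2 i) in
  let xn1 := v 0 (rshift n (0 : 'I_2)) in
  let y := v 0 (rshift n (1 : 'I_2)) in
  f y x + xn1 * y.

From HB Require Import structures.
From mathcomp Require Import all_boot all_order all_algebra.
From mathcomp Require Import all_classical all_reals.
From mathcomp Require Import trigo.
From mathcomp Require Import complex.
From mathcomp Require Import ring.
Set Implicit Arguments. Unset Strict Implicit. Unset Printing Implicit Defensive.
Import Order.TTheory GRing.Theory Num.Theory.
Local Open Scope ring_scope.
Local Open Scope complex_scope.

(* Write v = (x, u, y) with x in F_p^n and u, y in F_p.  Summing eps^(u (y - b_u))
   over u leaves p times the indicator of y = b_u, so
     hat F(b) = p eps^(-b_y b_u) hat f_(b_u)(b_x).
   Hence F is bent, and if g_j is the dual of f_j then F has the dual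
   F*(x, u, y) = g_u(x) - y u, whose Walsh transform is, by the same computation,
   p eps^(b_u b_y) hat g_(-b_y)(b_x); so F* is bent iff every g_j is.  Conversely
   a dual is unique, because a fourth root of unity times eps^a determines a when
   p is odd (and the root is 1 when p = 2), and every dual of F restricts on the
   slices u = j, y = 0 to duals of the f_j, so it is the F* built from them. *)

Section Cis.
Variable R : realType.

Lemma cis_mul (a b : R) :
  (cos a +i* sin a) * (cos b +i* sin b) = cos (a + b) +i* sin (a + b).
Proof.
rewrite cosD sinD; apply/eqP; rewrite eq_complex /=; apply/andP; split; apply/eqP=> //.
by rewrite addrC.
Qed.

Lemma cis_expn (a : R) m : (cos a +i* sin a) ^+ m = cos (m%:R * a) +i* sin (m%:R * a).
Proof.
elim: m => [|m IHm]; first by rewrite expr0 mul0r cos0 sin0.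
by rewrite exprS IHm cis_mul mulrSr mulrDl mul1r addrC.
Qed.

Lemma cos_lt1 (x : R) : 0 < x < pi *+ 2 -> cos x < 1.
Proof.
move=> /andP[x_gt0 x_lt2pi]; have pi_gt0 : 0 < pi :> R := pi_gt0 R.
have [x_lepi|pi_ltx] := lerP x pi.
  by rewrite -cos0 ltr_cos ?in_itv /= ?lexx ?(ltW pi_gt0) ?(ltW x_gt0).
have -> : cos x = cos (pi *+ 2 - x).
  by rewrite -[RHS]cosN opprB -(cosD2pi (x - pi *+ 2)) subrK.
rewrite -cos0 ltr_cos ?in_itv /= ?lexx ?(ltW pi_gt0) ?subr_gt0 //.
by rewrite subr_ge0 (ltW x_lt2pi) lerBlDr mulr2n lerD2l ltW.
Qed.

Lemma eps_expp p : (0 < p)%N -> eps R p ^+ p = 1.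
Proof.
move=> p_gt0; rewrite /eps cis_expn mulrCA mulfV ?pnatr_eq0 -?lt0n // mulr1.
by rewrite mulr_natl cos2pi sin2pi.
Qed.

Lemma eps_expn_neq1 p m : (0 < m < p)%N -> eps R p ^+ m != 1.
Proof.
move=> /andP[m_gt0 m_ltp]; have p_gt0 : (0 < p)%N := ltn_trans m_gt0 m_ltp.
have pi_gt0 : 0 < pi :> R := pi_gt0 R.
have pR_gt0 : 0 < p%:R :> R by rewrite ltr0n.
rewrite /eps cis_expn; apply/negP => /eqP[].
set th := (X in cos X = _) => cos_eq1 _.
suff : cos th < 1 by rewrite cos_eq1 ltxx.
apply: cos_lt1; rewrite /th; apply/andP; split.
  by rewrite mulr_gt0 ?ltr0n // divr_gt0 // mulr_gt0.
rewrite mulrA ltr_pdivrMr // -[pi *+ 2]mulr_natl [X in _ < X]mulrC.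
by rewrite ltr_pM2r ?ltr_nat // mulr_gt0 // ltr0n.
Qed.

End Cis.

Section AdditiveCharacter.
Variables (R : realType) (p : nat).
Hypothesis p_pr : prime p.

Definition chi (k : 'F_p) : complex R := eps R p ^+ k.

Lemma chi0 : chi 0 = 1.
Proof. by rewrite /chi expr0. Qed.

Lemma chiD a b : chi (a + b) = chi a * chi b.
Proof.
have valD : nat_of_ord (a + b) = ((a + b) %% p)%N.
  by rewrite -val_Fp_nat // natrD !natr_Zp.
by rewrite /chi valD expr_mod ?exprD // eps_expp // prime_gt0.
Qed.

Lemma chiMn a k : chi (a *+ k) = chi a ^+ k.
Proof.
elim: k => [|k IHk]; first by rewrite mulr0n expr0 chi0.
by rewrite mulrS exprS chiD IHk.
Qed.

Lemma norm_chi a : `|chi a| = 1.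
Proof.
have norm_eps : `|eps R p| = 1.
  apply/eqP; rewrite -(pexpr_eq1 (prime_gt0 p_pr)) // -normrX.
  by rewrite eps_expp ?prime_gt0 // normr1.
by rewrite /chi normrX norm_eps expr1n.
Qed.

Lemma chi_inj : injective chi.
Proof.
suff chi_eq1 c : chi c = 1 -> c = 0.
  move=> a b eq_ab; apply/eqP; rewrite -subr_eq0; apply/eqP/chi_eq1.
  by rewrite chiD eq_ab -chiD subrr chi0.
move=> chi_c1; apply/val_inj/eqP; rewrite /= eqn_leq leq0n andbT leqNgt.
apply/negP => c_gt0.
have c_ltp : (c < p)%N by rewrite -[X in (_ < X)%N](Fp_cast p_pr) ltn_ord.
by have := @eps_expn_neq1 R p c; rewrite c_gt0 c_ltp -/(chi c) chi_c1 eqxx => /(_ isT).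
Qed.

Lemma sum_chi : \sum_(u : 'F_p) chi u = 0.
Proof.
have -> : \sum_(u : 'F_p) chi u = \sum_(i < (Zp_trunc (pdiv p)).+2) eps R p ^+ i by [].
rewrite -(big_mkord xpredT (fun i => eps R p ^+ i)) Fp_cast // big_mkord.
have eps_neq1 : eps R p != 1.
  by rewrite -[eps R p]expr1 eps_expn_neq1 // prime_gt1.
have : (eps R p - 1) * \sum_(i < p) eps R p ^+ i = 0.
  by rewrite -subrX1 eps_expp ?prime_gt0 // subrr.
by move/eqP; rewrite mulf_eq0 subr_eq0 (negbTE eps_neq1) => /eqP.
Qed.

Lemma sum_chiM t : \sum_(u : 'F_p) chi (u * t) = if t == 0 then p%:R else 0.
Proof.
have [->|t_neq0] := eqVneq t 0.
  by under eq_bigr do rewrite mulr0 chi0; rewrite sumr_const card_Fp.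
transitivity (\sum_(u : 'F_p) chi u); last exact: sum_chi.
symmetry; exact: (reindex_inj (mulIf t_neq0)).
Qed.

Lemma sum_chiM_delta (A : 'F_p -> complex R) c :
  \sum_y A y * \sum_u chi (u * (y - c)) = p%:R * A c.
Proof.
under eq_bigr do rewrite sum_chiM.
rewrite (bigD1 c) // subrr eqxx big1 => [|y y_neq_c]; first by rewrite /= addr0 mulrC.
by rewrite subr_eq0 (negbTE y_neq_c) mulr0.
Qed.

Lemma zeta_chi_inj (z z' : complex R) a b :
  z \in [:: 1; -1; 'i; -'i] -> (p = 2%N -> z = 1) ->
  z' \in [:: 1; -1; 'i; -'i] -> (p = 2%N -> z' = 1) ->
  z * chi a = z' * chi b -> a = b.
Proof.
move=> zP z2 z'P z'2 eq_ab; have [p2|p_neq2] := eqVneq p 2%N.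
  by apply: chi_inj; move: eq_ab; rewrite z2 // z'2 // !mul1r.
have zeta4 w : w \in [:: 1; -1; 'i; -'i] -> w ^+ 4 = 1 :> complex R.
  have i2 : 'i ^+ 2 = -1 :> complex R.
    by rewrite expr2; apply/eqP; rewrite eq_complex /=; apply/andP; split; apply/eqP; ring.
  rewrite !inE -[4%N]/(2 * 2)%N exprM.
  by move=> /or4P[] /eqP->; rewrite ?sqrrN ?i2 ?sqrrN !expr1n.
have four_neq0 : (4%:R : 'F_p) != 0.
  rewrite -(dvdn_pcharf (pchar_Fp p_pr)) -[4%N]/(2 ^ 2)%N Euclid_dvdX //.
  by rewrite dvdn_prime2 // andbT.
move/(congr1 (fun w => w ^+ 4)): eq_ab; rewrite /= !exprMn (zeta4 _ zP) (zeta4 _ z'P) !mul1r.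
rewrite -!chiMn => /chi_inj/eqP.
by rewrite -subr_eq0 -mulrnBl -mulr_natr mulf_eq0 (negbTE four_neq0) orbF subr_eq0 => /eqP.
Qed.

End AdditiveCharacter.

Section WalshTransform.
Variables (R : realType) (p N : nat).
Hypothesis p_pr : prime p.

Lemma walshE (h : 'rV['F_p]_N -> 'F_p) b : walsh R h b = \sum_x chi R (h x - dotp b x).
Proof. by []. Qed.

Lemma eq_bent (h h' : 'rV['F_p]_N -> 'F_p) : h =1 h' -> bent R h -> bent R h'.
Proof.
move=> eq_hh' h_bent b; rewrite -(h_bent b) !walshE.
by under eq_bigr do rewrite -eq_hh'.
Qed.

Lemma is_dual_unique (h g g' : 'rV['F_p]_N -> 'F_p) :
  is_dual R h g -> is_dual R h g' -> g =1 g'.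
Proof.
move=> g_dual g'_dual b.
have [z [zP [z2 walsh_g]]] := g_dual b; have [z' [z'P [z'2 walsh_g']]] := g'_dual b.
have sqrtp_neq0 : sqrtC (p%:R : complex R) ^+ N != 0.
  by rewrite expf_neq0 // sqrtC_eq0 pnatr_eq0 -lt0n prime_gt0.
apply: (zeta_chi_inj p_pr zP z2 z'P z'2); apply: (mulIf sqrtp_neq0).
by rewrite mulrAC [RHS]mulrAC; rewrite walsh_g in walsh_g'.
Qed.

End WalshTransform.

Section Coordinates.
Variables p n : nat.
Implicit Types (v : 'rV['F_p]_(n + 2)) (x : 'rV['F_p]_n) (u y : 'F_p).

Definition xpart v : 'rV['F_p]_n := \row_(i < n) v 0 (lshift 2 i).
Definition upart v : 'F_p := v 0 (rshift n (0 : 'I_2)).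
Definition ypart v : 'F_p := v 0 (rshift n (1 : 'I_2)).

Definition mkrow x u y : 'rV['F_p]_(n + 2) :=
  \row_i match fintype.split i with inl k => x 0 k | inr j => if j == 0 then u else y end.

Lemma xpart_mkrow x u y : xpart (mkrow x u y) = x.
Proof. by apply/rowP => k; rewrite !mxE (unsplitK (inl k)). Qed.

Lemma upart_mkrow x u y : upart (mkrow x u y) = u.
Proof. by rewrite /upart mxE (unsplitK (inr (0 : 'I_2))). Qed.

Lemma ypart_mkrow x u y : ypart (mkrow x u y) = y.
Proof. by rewrite /ypart mxE (unsplitK (inr (1 : 'I_2))). Qed.

Lemma mkrow_parts v : mkrow (xpart v) (upart v) (ypart v) = v.
Proof.
apply/rowP => i; rewrite mxE; case: split_ordP => [k ->|j ->]; first by rewrite mxE.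
rewrite /upart /ypart; case: eqP => [->//|/eqP j_neq0].
by congr (v 0 (rshift n _)); apply/val_inj; case: j j_neq0 => [[|[|m]] //= Hm].
Qed.

Lemma sum_mkrow (V : nmodType) (G : 'rV['F_p]_(n + 2) -> V) :
  \sum_v G v = \sum_x \sum_u \sum_y G (mkrow x u y).
Proof.
rewrite (reindex (fun t : 'rV['F_p]_n * ('F_p * 'F_p) => mkrow t.1 t.2.1 t.2.2)) /=.
  by under [RHS]eq_bigr do rewrite pair_bigA; rewrite pair_bigA.
exists (fun v => (xpart v, (upart v, ypart v))) => [[x [u y]] _|v _].
  by rewrite xpart_mkrow upart_mkrow ypart_mkrow.
exact: mkrow_parts.
Qed.

Lemma dotp_mkrow b x u y :
  dotp b (mkrow x u y) = dotp (xpart b) x + upart b * u + ypart b * y.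
Proof.
have lift1 : lift ord0 ord0 = 1 :> 'I_2 by apply/val_inj.
rewrite /dotp big_split_ord /= !big_ord_recl big_ord0 addr0 addrA lift1.
congr (_ + _ * _ + _ * _); first by apply: eq_bigr => i _; rewrite !mxE (unsplitK (inl i)).
- exact: upart_mkrow.
- exact: ypart_mkrow.
Qed.

Lemma glueF_mkrow (f : 'F_p -> 'rV['F_p]_n -> 'F_p) x u y :
  glueF f (mkrow x u y) = f y x + u * y.
Proof.
by rewrite /glueF -/(xpart _) -/(upart _) -/(ypart _) xpart_mkrow upart_mkrow ypart_mkrow.
Qed.

End Coordinates.

Section GluedWalsh.
Variables (R : realType) (p n : nat).
Hypothesis p_pr : prime p.
Local Notation chi := (@chi R p).
Local Notation sqrtp := (sqrtC (p%:R : complex R)).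

Lemma walsh_mkrow (h : 'rV['F_p]_(n + 2) -> 'F_p) b :
  walsh R h b = \sum_x \sum_u \sum_y
    chi (h (mkrow x u y) - (dotp (xpart b) x + upart b * u + ypart b * y)).
Proof.
rewrite walshE sum_mkrow; apply: eq_bigr => x _; apply: eq_bigr => u _.
by apply: eq_bigr => y _; rewrite dotp_mkrow.
Qed.

Lemma walsh_glueF (f : 'F_p -> 'rV['F_p]_n -> 'F_p) b :
  walsh R (glueF f) b =
    p%:R * chi (- (ypart b * upart b)) * walsh R (f (upart b)) (xpart b).
Proof.
rewrite walsh_mkrow.
transitivity (\sum_x \sum_y chi (f y x - dotp (xpart b) x - ypart b * y) *
                \sum_u chi (u * (y - upart b))).
  apply: eq_bigr => x _; rewrite exchange_big; apply: eq_bigr => y _.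
  rewrite mulr_sumr; apply: eq_bigr => u _; rewrite glueF_mkrow -chiD //.
  by congr (chi _); ring.
under eq_bigr do rewrite sum_chiM_delta //.
rewrite walshE -mulr_sumr -mulrA; congr (_ * _); rewrite mulr_sumr.
by apply: eq_bigr => x _; rewrite -chiD //; congr (chi _); ring.
Qed.

Definition dualF (g : 'F_p -> 'rV['F_p]_n -> 'F_p) (v : 'rV['F_p]_(n + 2)) : 'F_p :=
  g (upart v) (xpart v) - ypart v * upart v.

Lemma walsh_dualF (g : 'F_p -> 'rV['F_p]_n -> 'F_p) b :
  walsh R (dualF g) b =
    p%:R * chi (upart b * ypart b) * walsh R (g (- ypart b)) (xpart b).
Proof.
rewrite walsh_mkrow.
transitivity (\sum_x \sum_u chi (g u x - dotp (xpart b) x - upart b * u) *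
                \sum_y chi (y * (u - - ypart b))).
  apply: eq_bigr => x _; apply: eq_bigr => u _; rewrite mulr_sumr (reindex_inj oppr_inj).
  apply: eq_bigr => y _; rewrite /dualF xpart_mkrow upart_mkrow ypart_mkrow -chiD //.
  by congr (chi _); ring.
under eq_bigr do rewrite sum_chiM_delta //.
rewrite walshE -mulr_sumr -mulrA; congr (_ * _); rewrite mulr_sumr.
by apply: eq_bigr => x _; rewrite -chiD //; congr (chi _); ring.
Qed.

Lemma natrp_neq0 : p%:R != 0 :> complex R.
Proof. by rewrite pnatr_eq0 -lt0n prime_gt0. Qed.

Lemma sqrtp_expD2 : sqrtp ^+ (n + 2) = p%:R * sqrtp ^+ n.
Proof. by rewrite exprD sqrtCK mulrC. Qed.

Lemma norm_walsh_scaled c (w : complex R) :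
  `|p%:R * chi c * w| = sqrtp ^+ (n + 2) <-> `|w| = sqrtp ^+ n.
Proof.
rewrite !normrM normr_nat norm_chi // mulr1 sqrtp_expD2.
by split=> [/(mulfI natrp_neq0)|->].
Qed.

Lemma bent_glueF (f : 'F_p -> 'rV['F_p]_n -> 'F_p) :
  (forall j, bent R (f j)) -> bent R (glueF f).
Proof. by move=> f_bent b; rewrite walsh_glueF; apply/norm_walsh_scaled/f_bent. Qed.

Lemma bent_dualF (g : 'F_p -> 'rV['F_p]_n -> 'F_p) :
  bent R (dualF g) <-> forall j, bent R (g j).
Proof.
split=> [g_bent j a | g_bent b].
  have := g_bent (mkrow a 0 (- j)).
  by rewrite walsh_dualF upart_mkrow ypart_mkrow xpart_mkrow opprK => /norm_walsh_scaled.
by rewrite walsh_dualF; apply/norm_walsh_scaled; apply: g_bent.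
Qed.

Lemma is_dual_glueF (f g : 'F_p -> 'rV['F_p]_n -> 'F_p) :
  (forall j, is_dual R (f j) (g j)) -> is_dual R (glueF f) (dualF g).
Proof.
move=> fg_dual b; have [z [zP [z2 walsh_f]]] := fg_dual (upart b) (xpart b).
exists z; do 2!split=> //.
rewrite walsh_glueF walsh_f sqrtp_expD2 -[eps R p ^+ g _ _]/(chi (g _ _)).
by rewrite -[eps R p ^+ dualF g b]/(chi (dualF g b)) chiD //; ring.
Qed.

Lemma is_dual_glueF_slices (f : 'F_p -> 'rV['F_p]_n -> 'F_p) G :
  is_dual R (glueF f) G -> forall j, is_dual R (f j) (fun a => G (mkrow a j 0)).
Proof.
move=> G_dual j a; have [z [zP [z2 walsh_G]]] := G_dual (mkrow a j 0).
exists z; do 2!split=> //; apply: (mulfI natrp_neq0).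
move: walsh_G; rewrite walsh_glueF upart_mkrow ypart_mkrow xpart_mkrow.
by rewrite mul0r oppr0 chi0 mulr1 sqrtp_expD2 => ->; ring.
Qed.

End GluedWalsh.

Theorem theorem3 (R : realType) (p n : nat) (f : 'F_p -> 'rV['F_p]_n -> 'F_p) :
  prime p -> (0 < n)%N -> (forall j, bent R (f j)) ->
  (dual_bent R (glueF f) <-> forall j, dual_bent R (f j)).
Proof.
move=> p_pr _ f_bent; split=> [[_ [G [G_dual G_bent]]] j | f_dual_bent].
  pose g u a := G (mkrow a u 0).
  have g_dual : forall j, is_dual R (f j) (g j) := is_dual_glueF_slices p_pr G_dual.
  have G_eq : G =1 dualF g := is_dual_unique p_pr G_dual (is_dual_glueF p_pr g_dual).
  have g_bent := (bent_dualF _ p_pr g).1 (eq_bent G_eq G_bent).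
  split; [exact: f_bent | exists (g j); split; [exact: g_dual | exact: g_bent]].
have [g g_dual_bent] := choice (fun j => (f_dual_bent j).2).
split; first exact: bent_glueF.
exists (dualF g); split.
  by apply: is_dual_glueF => // j; case: (g_dual_bent j).
by apply/(bent_dualF _ p_pr) => j; case: (g_dual_bent j).
Qed.
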